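(* Let $\mathbf m>0$ be a real number, $\Gamma_1,\Gamma_2$ co-prime integers with $1<\Gamma_1<\Gamma_2$, $\mathbf m_i=\mathbf m\Gamma_i$ ($i=1,2$), let $1\le j\le K+1$ and $\mathbf X=\min\big(\mathbf m_2(1+\ddot n_{2,j}),\,\mathbf m_1(1+\ddot n_{1,j})\big)$. (a) For every real $\mathbf N$ with $0\le\mathbf N<\mathbf X$ and all real erroneous remainders $\tilde{\mathbf r}_1,\tilde{\mathbf r}_2$ of $\mathbf N$ whose errors satisfy $$-\frac{\sigma_j}{2}\le\frac{\Delta\mathbf r_1-\Delta\mathbf r_2}{\mathbf m}<\frac{\sigma_j}{2},$$ Algorithm 2 (real version, index $j$) returns $\hat n_1=n_1$, $\hat n_2=n_2$. In particular this holds whenever $|\Delta\mathbf r_i|\le\boldsymbol\tau$ for $i=1,2$ with $\boldsymbol\tau<\mathbf m\sigma_j/4$. (b) (Sharpness) For $\mathbf N=\mathbf X$ there exist real erroneous remainders whose errors satisfy the condition in (a), for which Algorithm 2 returns $(\hat n_1,\hat n_2)\ne(n_1,n_2)$.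
   Context: $|a|_b$ is the remainder of the integer $a$ modulo the positive integer $b$; $[x]=\lfloor x+1/2\rfloor$. For real $\mathbf N\ge0$: folding integers $n_i=\lfloor\mathbf N/\mathbf m_i\rfloor$ and real remainders $\mathbf r_i=\mathbf N-n_i\mathbf m_i\in[0,\mathbf m_i)$; erroneous remainders are reals $\tilde{\mathbf r}_i\in[0,\mathbf m_i)$ with errors $\Delta\mathbf r_i=\tilde{\mathbf r}_i-\mathbf r_i$. Euclidean sequence: $\sigma_{-1}=\Gamma_2$, $\sigma_0=\Gamma_1$, $\sigma_i=|\sigma_{i-2}|_{\sigma_{i-1}}$ for $i\ge1$; $K\ge0$ is the index with $\sigma_K>1$, $\sigma_{K+1}=1$. For $1\le n<\Gamma_1$, $S_{2,n}=\{|t\Gamma_2|_{\Gamma_1}:0\le t\le n\}$, $d_{2,n}$ = minimum distance between distinct elements of $S_{2,n}$; for $1\le n<\Gamma_2$, $S_{1,n}=\{|t\Gamma_1|_{\Gamma_2}:0\le t\le n\}$, $d_{1,n}$ likewise. $\ddot n_{2,j}=\max\{n:1\le n<\Gamma_1,\ d_{2,n}\ge\sigma_j\}$, $\ddot n_{1,j}=\max\{n:1\le n<\Gamma_2,\ d_{1,n}\ge\sigma_j\}$. $\bar\Gamma_{21}$ is the inverse of $\Gamma_2$ modulo $\Gamma_1$, $\bar\Gamma_{12}$ the inverse of $\Gamma_1$ modulo $\Gamma_2$. Algorithm 2, real version (index $j$, input $\tilde{\mathbf r}_1,\tilde{\mathbf r}_2$): compute $\mathbf q_{21}=(\tilde{\mathbf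 r}_1-\tilde{\mathbf r}_2)/\mathbf m$. (i) If $\mathbf q_{21}\ge\sigma_j/2$: if some $x\in S_{2,\ddot n_{2,j}}$ satisfies $-\sigma_j/2\le\mathbf q_{21}-x<\sigma_j/2$, let $s_2=x$; otherwise let $s_2$ be an element of $S_{2,\ddot n_{2,j}}$ at minimum distance from $\mathbf q_{21}$. Let $\hat n_2\in[0,\Gamma_1)$ with $\hat n_2\equiv s_2\bar\Gamma_{21}\pmod{\Gamma_1}$ and $\hat n_1=[(\hat n_2\mathbf m_2+\tilde{\mathbf r}_2-\tilde{\mathbf r}_1)/\mathbf m_1]$. (ii) If $\mathbf q_{21}<-\sigma_j/2$: if some $y\in S_{1,\ddot n_{1,j}}$ satisfies $-\sigma_j/2\le\mathbf q_{21}+y<\sigma_j/2$, let $s_1=y$; otherwise let $s_1$ be an element of $S_{1,\ddot n_{1,j}}$ at minimum distance from $-\mathbf q_{21}$. Let $\hat n_1\in[0,\Gamma_2)$ with $\hat n_1\equiv s_1\bar\Gamma_{12}\pmod{\Gamma_2}$ and $\hat n_2=[(\hat n_1\mathbf m_1+\tilde{\mathbf r}_1-\tilde{\mathbf r}_2)/\mathbf m_2]$. (iii) If $-\sigma_j/2\le\mathbf q_{21}<\sigma_j/2$: $\hat n_1=\hat n_2=0$. *)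

From Stdlib Require Import Reals Lra Lia ZArith List.
Import ListNotations.
Open Scope R_scope.

Definition Rfloor (x : R) : Z := (up x - 1)%Z.
Definition Rround (x : R) : Z := Rfloor (x + / 2).

(* Euclidean sequence: sig_aux i = (sigma_{i-1}, sigma_i),
   sigma_{-1} = G2, sigma_0 = G1, sigma_i = |sigma_{i-2}|_{sigma_{i-1}}. *)
Fixpoint sig_aux (G1 G2 : Z) (i : nat) : Z * Z :=
  match i with
  | O => (G2, G1)
  | S k => let (a, b) := sig_aux G1 G2 k in (b, Z.modulo a b)
  end.
Definition eucl_sigma (G1 G2 : Z) (i : nat) : Z := snd (sig_aux G1 G2 i).

(* Sset a b n = { |t a|_b : 0 <= t <= n };
   S_{2,n} = Sset G2 G1 n,  S_{1,n} = Sset G1 G2 n *)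
Definition Sset (a b : Z) (n : nat) : list Z :=
  map (fun t => (Z.of_nat t * a) mod b)%Z (seq 0 (S n)).

Definition list_min (l : list Z) : Z :=
  match l with [] => 0%Z | x :: r => fold_right Z.min x r end.

Definition min_dist (l : list Z) : Z :=
  list_min (flat_map (fun x => flat_map (fun y =>
     if Z.eq_dec x y then [] else [Z.abs (x - y)]) l) l).

(* ddot a b s = max { n : 1 <= n < b, min_dist (Sset a b n) >= s };
   ddot_{2,j} = ddot G2 G1 sigma_j,  ddot_{1,j} = ddot G1 G2 sigma_j *)
Definition ddot (a b s : Z) : nat :=
  fold_right Nat.max 0%nat
    (filter (fun n => Z.leb s (min_dist (Sset a b n))) (seq 1 (Z.to_nat b - 1))).

Definition fold_int (Mi N : R) : Z := Rfloor (N / Mi).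
Definition rem_r (Mi N : R) : R := N - IZR (fold_int Mi N) * Mi.

(* Algorithm 2 (real version, index j): alg2 ... nh1 nh2 means that
   (nh1, nh2) is a possible output on input rt1, rt2 (the "element at minimum
   distance" choice may be non-deterministic in case of ties). *)
Definition alg2 (m : R) (G1 G2 : Z) (j : nat) (rt1 rt2 : R) (nh1 nh2 : Z) : Prop :=
  let m1 := m * IZR G1 in
  let m2 := m * IZR G2 in
  let q := (rt1 - rt2) / m in
  let sj := IZR (eucl_sigma G1 G2 j) in
  let S2 := Sset G2 G1 (ddot G2 G1 (eucl_sigma G1 G2 j)) in
  let S1 := Sset G1 G2 (ddot G1 G2 (eucl_sigma G1 G2 j)) in
  (sj / 2 <= q ->
     exists s2, In s2 S2 /\
       ((exists x, In x S2 /\ - sj / 2 <= q - IZR x < sj / 2) ->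
          - sj / 2 <= q - IZR s2 < sj / 2) /\
       (~ (exists x, In x S2 /\ - sj / 2 <= q - IZR x < sj / 2) ->
          forall y, In y S2 -> Rabs (q - IZR s2) <= Rabs (q - IZR y)) /\
       (0 <= nh2 < G1)%Z /\
       (exists inv, (G2 * inv) mod G1 = 1 /\ nh2 mod G1 = (s2 * inv) mod G1)%Z /\
       nh1 = Rround ((IZR nh2 * m2 + rt2 - rt1) / m1)) /\
  (q < - sj / 2 ->
     exists s1, In s1 S1 /\
       ((exists y, In y S1 /\ - sj / 2 <= q + IZR y < sj / 2) ->
          - sj / 2 <= q + IZR s1 < sj / 2) /\
       (~ (exists y, In y S1 /\ - sj / 2 <= q + IZR y < sj / 2) ->
          forall y, In y S1 -> Rabs (- q - IZR s1) <= Rabs (- q - IZR y)) /\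
       (0 <= nh1 < G2)%Z /\
       (exists inv, (G1 * inv) mod G2 = 1 /\ nh1 mod G2 = (s1 * inv) mod G2)%Z /\
       nh2 = Rround ((IZR nh1 * m1 + rt1 - rt2) / m2)) /\
  (- sj / 2 <= q < sj / 2 -> nh1 = 0%Z /\ nh2 = 0%Z).

(* Write N = n_i m_i + r_i and q = (r~_1 - r~_2)/m.  Then q = k + e with
   k = n_2 Γ_2 - n_1 Γ_1 and e = (Δr_1 - Δr_2)/m.  Below X the folding integers
   satisfy n_i <= n̈_{i,j}, so k is |n_2 Γ_2|_{Γ_1} when k >= 0 and -k is
   |n_1 Γ_1|_{Γ_2} when k <= 0; these lie in S_{2,n̈_{2,j}}, resp. S_{1,n̈_{1,j}},
   whose elements are σ_j apart.  Hence the window of width σ_j around q sees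
   exactly k, the algorithm selects it, and since Γ_2 is invertible modulo Γ_1
   it recovers n_2 (resp. n_1), the other folding integer being a rounding of
   n_1 - e/Γ_1 (resp. n_2 + e/Γ_2).  At N = X either N = m Γ_1 Γ_2, where both
   remainders vanish, or n_i = n̈_{i,j} + 1 and |n_i Γ_i| has a neighbour x in
   S_{i,n̈_{i,j}} at distance < σ_j; placing the erroneous remainder halfway
   between them makes the algorithm select x instead. *)
From Stdlib Require Import Reals Lra Lia ZArith List.
Import ListNotations.
Open Scope R_scope.

Lemma Rfloor_spec (x : R) : IZR (Rfloor x) <= x < IZR (Rfloor x) + 1.
Proof.
  unfold Rfloor. destruct (archimed x) as [H1 H2].
  rewrite minus_IZR. simpl. lra.
Qed.

Lemma Rfloor_unique (z : Z) (x : R) : IZR z <= x < IZR z + 1 -> Rfloor x = z.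
Proof.
  intros [H1 H2]. unfold Rfloor.
  assert (up x = z + 1)%Z by (symmetry; apply tech_up; rewrite plus_IZR; simpl; lra).
  lia.
Qed.

Lemma Rround_add_div (n : Z) (d g : R) :
  0 < g -> - g < 2 * d < g -> Rround (IZR n + d / g) = n.
Proof.
  intros Hg Hd. unfold Rround. apply Rfloor_unique.
  assert (- / 2 < d / g < / 2).
  { split; apply (Rmult_lt_reg_r g); try lra;
      replace (d / g * g) with d by (field; lra); lra. }
  lra.
Qed.

Lemma fold_int_unique (Mi N : R) (z : Z) :
  0 < Mi -> IZR z * Mi <= N < (IZR z + 1) * Mi -> fold_int Mi N = z.
Proof.
  intros HM [H1 H2]. unfold fold_int. apply Rfloor_unique.
  split; [apply (Rmult_le_reg_r Mi) | apply (Rmult_lt_reg_r Mi)]; try lra;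
    replace (N / Mi * Mi) with N by (field; lra); lra.
Qed.

Lemma fold_int_bounds (Mi N : R) :
  0 < Mi -> IZR (fold_int Mi N) * Mi <= N < (IZR (fold_int Mi N) + 1) * Mi.
Proof.
  intros HM. unfold fold_int. destruct (Rfloor_spec (N / Mi)) as [H1 H2].
  replace N with (N / Mi * Mi) at 2 3 by (field; lra).
  split; [apply Rmult_le_compat_r | apply Rmult_lt_compat_r]; lra.
Qed.

Lemma fold_int_range (Mi N : R) (D : nat) :
  0 < Mi -> 0 <= N < Mi * (1 + INR D) -> (0 <= fold_int Mi N <= Z.of_nat D)%Z.
Proof.
  intros HM [H0 H1]. destruct (fold_int_bounds Mi N HM) as [B1 B2].
  rewrite INR_IZR_INZ in H1.
  assert (IZR (-1) < IZR (fold_int Mi N)) by (simpl; nra).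
  assert (IZR (fold_int Mi N) < IZR (Z.of_nat D + 1)) by (rewrite plus_IZR; simpl; nra).
  apply lt_IZR in H, H2. lia.
Qed.

Lemma fold_int_mul (m : R) (G w : Z) : 0 < m -> (0 < G)%Z ->
  fold_int (m * IZR G) (m * IZR w) = (w / G)%Z /\
  rem_r (m * IZR G) (m * IZR w) = m * IZR (w mod G).
Proof.
  intros Hm HG.
  pose proof (Z.mod_pos_bound w G HG) as [B1 B2].
  apply IZR_le in B1. apply IZR_lt in B2.
  assert (Ew : IZR w = IZR G * IZR (w / G) + IZR (w mod G)).
  { rewrite <- mult_IZR, <- plus_IZR. f_equal. apply Z.div_mod. lia. }
  assert (F : fold_int (m * IZR G) (m * IZR w) = (w / G)%Z).
  { apply fold_int_unique; [apply IZR_lt in HG; nra|]. rewrite Ew. split; nra. }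
  split; [exact F|]. unfold rem_r. rewrite F, Ew. ring.
Qed.

Lemma fold_int_mul_multiple (m : R) (G n : Z) : 0 < m -> (0 < G)%Z ->
  fold_int (m * IZR G) (m * IZR (n * G)) = n /\ rem_r (m * IZR G) (m * IZR (n * G)) = 0.
Proof.
  intros Hm HG. destruct (fold_int_mul m G (n * G) Hm HG) as [F R].
  rewrite Z.div_mul, Z.mod_mul in * by lia. rewrite R. split; [exact F | ring].
Qed.

(** * Minimum distance and the sets S *)

Definition pair_dists (l : list Z) : list Z :=
  flat_map (fun x => flat_map (fun y =>
     if Z.eq_dec x y then [] else [Z.abs (x - y)]) l) l.

Lemma In_pair_dists (l : list Z) (d : Z) :
  In d (pair_dists l) <-> exists x y, In x l /\ In y l /\ x <> y /\ d = Z.abs (x - y).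
Proof.
  unfold pair_dists. rewrite in_flat_map. split.
  - intros [x [Hx H]]. apply in_flat_map in H as [y [Hy H]].
    destruct (Z.eq_dec x y) as [|Hne]; [destruct H|].
    destruct H as [H|[]]. exists x, y. auto.
  - intros [x [y [Hx [Hy [Hne ->]]]]]. exists x. split; [exact Hx|].
    apply in_flat_map. exists y. split; [exact Hy|].
    destruct (Z.eq_dec x y); [contradiction | left; reflexivity].
Qed.

Lemma fold_right_min_le (x z : Z) (r : list Z) : In z (x :: r) -> (fold_right Z.min x r <= z)%Z.
Proof.
  induction r as [|y r IH]; simpl; intros [H|H].
  - lia.
  - destruct H.
  - specialize (IH (or_introl H)). lia.
  - destruct H as [-> |H]; [lia|]. specialize (IH (or_intror H)). lia.
Qed.

Lemma fold_right_min_in (x : Z) (r : list Z) : In (fold_right Z.min x r) (x :: r).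
Proof.
  induction r as [|y r IH]; simpl; [now left|].
  destruct (Z.min_spec y (fold_right Z.min x r)) as [[_ ->]|[_ ->]]; [now right; left|].
  destruct IH as [IH|IH]; [now left | now right; right].
Qed.

Lemma min_dist_le (l : list Z) (x y : Z) :
  In x l -> In y l -> x <> y -> (min_dist l <= Z.abs (x - y))%Z.
Proof.
  intros Hx Hy Hne. unfold min_dist, list_min.
  assert (H : In (Z.abs (x - y)) (pair_dists l)) by (apply In_pair_dists; eauto 6).
  change (flat_map _ l) with (pair_dists l).
  destruct (pair_dists l) as [|d r]; [destruct H | now apply fold_right_min_le].
Qed.

Lemma min_dist_attained (l : list Z) (x y : Z) : In x l -> In y l -> x <> y ->
  exists a b, In a l /\ In b l /\ a <> b /\ min_dist l = Z.abs (a - b).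
Proof.
  intros Hx Hy Hne. unfold min_dist, list_min.
  assert (H : In (Z.abs (x - y)) (pair_dists l)) by (apply In_pair_dists; eauto 6).
  change (flat_map _ l) with (pair_dists l).
  apply In_pair_dists.
  destruct (pair_dists l) as [|d r]; [destruct H | apply fold_right_min_in].
Qed.

Lemma In_Sset (a b : Z) (n : nat) (x : Z) :
  In x (Sset a b n) <-> exists t, (t <= n)%nat /\ x = ((Z.of_nat t * a) mod b)%Z.
Proof.
  unfold Sset. rewrite in_map_iff. split.
  - intros [t [E H]]. apply in_seq in H. exists t. split; [lia | auto].
  - intros [t [H E]]. exists t. split; [auto | apply in_seq; lia].
Qed.

Lemma Sset_mod_In (a b : Z) (n : nat) (t : Z) :
  (0 <= t)%Z -> (Z.to_nat t <= n)%nat -> In ((t * a) mod b)%Z (Sset a b n).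
Proof. intros. apply In_Sset. exists (Z.to_nat t). rewrite Z2Nat.id; auto. Qed.

Lemma Sset_0 (a b : Z) (n : nat) : In 0%Z (Sset a b n).
Proof. apply (Sset_mod_In a b n 0); simpl; lia. Qed.

Lemma Sset_bound (a b : Z) (n : nat) (x : Z) : (0 < b)%Z -> In x (Sset a b n) -> (0 <= x < b)%Z.
Proof. intros Hb H. apply In_Sset in H as [t [_ ->]]. now apply Z.mod_pos_bound. Qed.

Lemma Sset_S (a b : Z) (n : nat) (x : Z) :
  In x (Sset a b (S n)) -> In x (Sset a b n) \/ x = ((Z.of_nat (S n) * a) mod b)%Z.
Proof.
  rewrite !In_Sset. intros [t [H E]].
  destruct (Nat.eq_dec t (S n)) as [-> |]; [now right | left; exists t; split; [lia | exact E]].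
Qed.

Definition separated (s : Z) (l : list Z) : Prop :=
  forall x y, In x l -> In y l -> x <> y -> (s <= Z.abs (x - y))%Z.

Lemma separated_eq (s : Z) (l : list Z) (x y : Z) : separated s l -> In x l -> In y l ->
  - IZR s < IZR x - IZR y < IZR s -> x = y.
Proof.
  intros Hsep Hx Hy [H1 H2]. destruct (Z.eq_dec x y) as [|Hne]; [assumption|].
  specialize (Hsep x y Hx Hy Hne).
  rewrite <- minus_IZR in H1, H2. rewrite <- opp_IZR in H1.
  apply lt_IZR in H1, H2. lia.
Qed.

(** * The bound n̈ *)

Lemma list_max_In (l : list nat) : list_max l = 0%nat \/ In (list_max l) l.
Proof.
  induction l as [|a l IH]; simpl; [now left|]. fold (list_max l).
  destruct (Nat.max_spec a (list_max l)) as [[_ ->]|[_ ->]]; [|now right; left].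
  destruct IH as [IH|IH]; [now left | now right; right].
Qed.

Lemma In_le_list_max (l : list nat) (n : nat) : In n l -> (n <= list_max l)%nat.
Proof.
  intros H. pose proof (proj1 (list_max_le l (list_max l)) (le_n _)) as HF.
  rewrite Forall_forall in HF. exact (HF n H).
Qed.

Section Ddot.

Variables (a b s : Z).
Local Notation D := (ddot a b s).
Local Notation cands := (filter (fun n => Z.leb s (min_dist (Sset a b n))) (seq 1 (Z.to_nat b - 1))).

Lemma ddot_lt : (1 < b)%Z -> (Z.of_nat D < b)%Z.
Proof.
  intros Hb. unfold ddot. change (fold_right Nat.max 0%nat cands) with (list_max cands).
  destruct (list_max_In cands) as [-> |H]; [lia|].
  apply filter_In in H as [H _]. apply in_seq in H. lia.
Qed.

Lemma ddot_separated : separated s (Sset a b D).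
Proof.
  intros x y Hx Hy Hne. unfold ddot in *.
  change (fold_right Nat.max 0%nat cands) with (list_max cands) in *.
  destruct (list_max_In cands) as [E|H].
  - rewrite E in Hx, Hy. apply In_Sset in Hx as [t [Ht ->]], Hy as [u [Hu ->]].
    replace t with 0%nat in * by lia. replace u with 0%nat in * by lia. congruence.
  - apply filter_In in H as [_ H]. apply Z.leb_le in H.
    pose proof (min_dist_le _ _ _ Hx Hy Hne). lia.
Qed.

Lemma ddot_maximal (n : nat) : (D < n)%nat -> (1 <= n)%nat -> (Z.of_nat n < b)%Z ->
  (min_dist (Sset a b n) < s)%Z.
Proof.
  intros H1 H2 H3. destruct (Z.leb s (min_dist (Sset a b n))) eqn:E; [|now apply Z.leb_gt].
  assert (Hin : In n cands) by (apply filter_In; split; [apply in_seq; lia | exact E]).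
  apply In_le_list_max in Hin. change (list_max cands) with D in Hin. lia.
Qed.

(* Since 0 and |a|_b are distinct elements of S_{b,n̈+1}, its minimum distance
   is attained; the closest pair cannot lie in the σ-separated S_{b,n̈}. *)
Lemma ddot_succ_close : (1 < b)%Z -> Z.gcd a b = 1%Z -> (Z.of_nat (S D) < b)%Z ->
  exists x, In x (Sset a b D) /\ x <> ((Z.of_nat (S D) * a) mod b)%Z /\
    (Z.abs (x - (Z.of_nat (S D) * a) mod b) < s)%Z.
Proof.
  intros Hb Hg Hn.
  assert (Ha : (a mod b <> 0)%Z).
  { intros E. apply Z.mod_divide in E; [|lia].
    assert (Hd : (b | Z.gcd a b)%Z) by (apply Z.gcd_greatest; [exact E | apply Z.divide_refl]).
    rewrite Hg in Hd. apply Z.divide_pos_le in Hd; lia. }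
  assert (H1 : In (a mod b)%Z (Sset a b (S D))) by (rewrite <- (Z.mul_1_l a) at 1; apply (Sset_mod_In a b _ 1); simpl; lia).
  destruct (min_dist_attained _ _ _ (Sset_0 a b (S D)) H1 (not_eq_sym Ha))
    as [x [y [Hx [Hy [Hxy E]]]]].
  pose proof (ddot_maximal (S D) (Nat.lt_succ_diag_r _) (le_n_S _ _ (Nat.le_0_l _)) Hn).
  apply Sset_S in Hx, Hy.
  destruct Hx as [Hx| ->], Hy as [Hy| ->].
  - pose proof (ddot_separated x y Hx Hy Hxy). lia.
  - exists x. repeat split; auto. lia.
  - exists y. repeat split; auto. lia.
  - congruence.
Qed.

End Ddot.

(** * The Euclidean sequence *)

Section Sigma.

Variables G1 G2 : Z.
Hypothesis HG1 : (0 < G1)%Z.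

Local Notation sigma := (eucl_sigma G1 G2).

Lemma eucl_sigma_SS (i : nat) : sigma (S (S i)) = (sigma i mod sigma (S i))%Z.
Proof. unfold eucl_sigma. simpl. destruct (sig_aux G1 G2 i). reflexivity. Qed.

Lemma eucl_sigma_nonneg (i : nat) : (0 <= sigma i)%Z.
Proof.
  enough (H : forall i, (0 <= sigma i)%Z /\ (0 <= sigma (S i))%Z) by apply H.
  induction i0 as [|i0 [IH1 IH2]].
  - split; [exact (Z.lt_le_incl _ _ HG1) | now apply Z.mod_pos_bound].
  - split; [exact IH2|]. rewrite eucl_sigma_SS.
    destruct (Z.eq_dec (sigma (S i0)) 0) as [-> |E]; [now rewrite Zmod_0_r|].
    apply Z.mod_pos_bound. lia.
Qed.

Lemma eucl_sigma_S_lt (i : nat) : (0 < sigma i)%Z -> (sigma (S i) < sigma i)%Z.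
Proof.
  destruct i as [|i]; intros H.
  - now apply Z.mod_pos_bound.
  - rewrite eucl_sigma_SS. now apply Z.mod_pos_bound.
Qed.

Lemma eucl_sigma_zero_even (i t : nat) : sigma i = 0%Z -> sigma (i + 2 * t) = 0%Z.
Proof.
  intros Hi. induction t as [|t IH]; [now rewrite Nat.add_0_r|].
  replace (i + 2 * S t)%nat with (S (S (i + 2 * t))) by lia.
  rewrite eucl_sigma_SS, IH. apply Zmod_0_l.
Qed.

Lemma eucl_sigma_range (K j : nat) : (1 < sigma K)%Z -> sigma (S K) = 1%Z ->
  (1 <= j <= S K)%nat -> (1 <= sigma j < G1)%Z.
Proof.
  intros HK HK1 Hj.
  assert (Hpos : forall i, (i <= S K)%nat -> (0 < sigma i)%Z).
  { intros i Hi. pose proof (eucl_sigma_nonneg i).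
    destruct (Z.eq_dec (sigma i) 0) as [E|E]; [exfalso|lia].
    destruct (Nat.Even_or_Odd (S K - i)) as [[t Ht]|[t Ht]];
      pose proof (eucl_sigma_zero_even i t E) as Z0;
      [replace (i + 2 * t)%nat with (S K) in Z0 | replace (i + 2 * t)%nat with K in Z0];
      lia. }
  assert (Hle : forall i, (1 <= i <= S K)%nat -> (sigma i < G1)%Z).
  { intros i Hi. induction i as [|i IH]; [lia|].
    pose proof (eucl_sigma_S_lt i (Hpos i ltac:(lia))).
    destruct i as [|i]; [exact H | specialize (IH ltac:(lia)); lia]. }
  pose proof (Hpos j ltac:(lia)). pose proof (Hle j Hj). lia.
Qed.

End Sigma.

Lemma mul_mod_cancel (a b x y : Z) : Z.gcd b a = 1%Z -> (0 <= x < b)%Z -> (0 <= y < b)%Z ->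
  ((x * a) mod b = (y * a) mod b)%Z -> x = y.
Proof.
  intros Hg Hx Hy E.
  assert (Hd : (b | (x - y) * a)%Z).
  { apply Z.mod_divide; [lia|]. rewrite Z.mul_sub_distr_r, Zminus_mod, E, Z.sub_diag.
    apply Zmod_0_l. }
  rewrite Z.mul_comm in Hd. apply Z.gauss in Hd; [|exact Hg].
  destruct Hd as [c Hc]. assert (c = 0)%Z by nia. lia.
Qed.

Lemma mod_inverse_mul (a b inv nh x : Z) : (0 < b)%Z -> ((a * inv) mod b = 1)%Z ->
  (nh mod b = (x * inv) mod b)%Z -> ((nh * a) mod b = x mod b)%Z.
Proof.
  intros Hb Hi H. rewrite <- Z.mul_mod_idemp_l, H, Z.mul_mod_idemp_l by lia.
  rewrite <- Z.mul_assoc, <- Z.mul_mod_idemp_r, (Z.mul_comm inv), Hi, Z.mul_1_r by lia.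
  reflexivity.
Qed.

Lemma mod_inverse_exists (a b : Z) : (1 < b)%Z -> Z.gcd a b = 1%Z ->
  exists inv, ((a * inv) mod b = 1)%Z.
Proof.
  intros Hb Hg. destruct (Z.gcd_bezout a b 1 Hg) as [u [v E]].
  exists u. symmetry. apply (Z.mod_unique _ _ (- v)); lia.
Qed.

(** * The branches of Algorithm 2 *)

Section Branches.

Variables (m : R) (G1 G2 : Z) (j : nat) (rt1 rt2 : R).

Local Notation s := (eucl_sigma G1 G2 j).
Local Notation S2 := (Sset G2 G1 (ddot G2 G1 s)).
Local Notation S1 := (Sset G1 G2 (ddot G1 G2 s)).
Local Notation q := ((rt1 - rt2) / m).

(* The window around q contains at most one element of the σ_j-separated set,
   so every admissible choice of s_2 (resp. s_1) is the given one. *)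
Lemma alg2_branch_i (nh1 nh2 x : Z) : (1 < G1)%Z -> alg2 m G1 G2 j rt1 rt2 nh1 nh2 ->
  IZR s / 2 <= q -> In x S2 -> - IZR s / 2 <= q - IZR x < IZR s / 2 ->
  (0 <= nh2 < G1)%Z /\ ((nh2 * G2) mod G1 = x)%Z /\
  nh1 = Rround ((IZR nh2 * (m * IZR G2) + rt2 - rt1) / (m * IZR G1)).
Proof.
  intros HG Halg Hq Hx Hw. destruct Halg as [Hi _].
  destruct (Hi Hq) as [s2 [Hs2 [Hwin [_ [Hnh2 [[inv [Hinv Hmd]] Hnh1]]]]]].
  specialize (Hwin (ex_intro _ x (conj Hx Hw))).
  assert (s2 = x) as ->.
  { apply (separated_eq s S2); auto; [apply ddot_separated | lra]. }
  split; [exact Hnh2 | split; [|exact Hnh1]].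
  rewrite (mod_inverse_mul G2 G1 inv nh2 x ltac:(lia) Hinv Hmd).
  apply Z.mod_small, (Sset_bound G2 G1 _ x ltac:(lia) Hx).
Qed.

Lemma alg2_branch_ii (nh1 nh2 y : Z) : (1 < G2)%Z -> alg2 m G1 G2 j rt1 rt2 nh1 nh2 ->
  q < - IZR s / 2 -> In y S1 -> - IZR s / 2 <= q + IZR y < IZR s / 2 ->
  (0 <= nh1 < G2)%Z /\ ((nh1 * G1) mod G2 = y)%Z /\
  nh2 = Rround ((IZR nh1 * (m * IZR G1) + rt1 - rt2) / (m * IZR G2)).
Proof.
  intros HG Halg Hq Hy Hw. destruct Halg as [_ [Hii _]].
  destruct (Hii Hq) as [s1 [Hs1 [Hwin [_ [Hnh1 [[inv [Hinv Hmd]] Hnh2]]]]]].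
  specialize (Hwin (ex_intro _ y (conj Hy Hw))).
  assert (s1 = y) as ->.
  { apply (separated_eq s S1); auto; [apply ddot_separated | lra]. }
  split; [exact Hnh1 | split; [|exact Hnh2]].
  rewrite (mod_inverse_mul G1 G2 inv nh1 y ltac:(lia) Hinv Hmd).
  apply Z.mod_small, (Sset_bound G1 G2 _ y ltac:(lia) Hy).
Qed.

Lemma alg2_branch_iii (nh1 nh2 : Z) : alg2 m G1 G2 j rt1 rt2 nh1 nh2 ->
  - IZR s / 2 <= q < IZR s / 2 -> nh1 = 0%Z /\ nh2 = 0%Z.
Proof. intros [_ [_ H]]. exact H. Qed.

Lemma alg2_branch_iii_exists : (0 <= s)%Z -> - IZR s / 2 <= q < IZR s / 2 ->
  alg2 m G1 G2 j rt1 rt2 0 0.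
Proof.
  intros Hs Hq. apply IZR_le in Hs.
  split; [|split]; [intros; lra | intros; lra | auto].
Qed.

Lemma alg2_branch_i_exists (x inv : Z) : (0 < G1)%Z -> (0 <= s)%Z ->
  IZR s / 2 <= q -> In x S2 -> - IZR s / 2 <= q - IZR x < IZR s / 2 ->
  ((G2 * inv) mod G1 = 1)%Z ->
  let nh2 := ((x * inv) mod G1)%Z in
  alg2 m G1 G2 j rt1 rt2 (Rround ((IZR nh2 * (m * IZR G2) + rt2 - rt1) / (m * IZR G1))) nh2.
Proof.
  intros HG Hs Hq Hx Hw Hinv nh2. apply IZR_le in Hs.
  split; [|split]; [|intros; lra | intros; lra].
  intros _. exists x. split; [exact Hx|]. split; [intros _; exact Hw|].
  split; [intros Hn; exfalso; exact (Hn (ex_intro _ x (conj Hx Hw)))|].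
  split; [now apply Z.mod_pos_bound|]. split; [|reflexivity].
  exists inv. split; [exact Hinv | apply Z.mod_mod; lia].
Qed.

Lemma alg2_branch_ii_exists (y inv : Z) : (0 < G2)%Z -> (0 <= s)%Z ->
  q < - IZR s / 2 -> In y S1 -> - IZR s / 2 <= q + IZR y < IZR s / 2 ->
  ((G1 * inv) mod G2 = 1)%Z ->
  let nh1 := ((y * inv) mod G2)%Z in
  alg2 m G1 G2 j rt1 rt2 nh1 (Rround ((IZR nh1 * (m * IZR G1) + rt1 - rt2) / (m * IZR G2))).
Proof.
  intros HG Hs Hq Hy Hw Hinv nh1. apply IZR_le in Hs.
  split; [|split]; [intros; lra | |intros; lra].
  intros _. exists y. split; [exact Hy|]. split; [intros _; exact Hw|].
  split; [intros Hn; exfalso; exact (Hn (ex_intro _ y (conj Hy Hw)))|].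
  split; [now apply Z.mod_pos_bound|]. split; [|reflexivity].
  exists inv. split; [exact Hinv | apply Z.mod_mod; lia].
Qed.

End Branches.

(** * Correctness below X *)

Section Correctness.

Variables (m : R) (G1 G2 : Z) (j : nat) (N rt1 rt2 : R).

Local Notation s := (eucl_sigma G1 G2 j).
Local Notation m1 := (m * IZR G1).
Local Notation m2 := (m * IZR G2).
Local Notation D1 := (ddot G1 G2 s).
Local Notation D2 := (ddot G2 G1 s).
Local Notation n1 := (fold_int m1 N).
Local Notation n2 := (fold_int m2 N).
Local Notation k := (n2 * G2 - n1 * G1)%Z.
Local Notation q := ((rt1 - rt2) / m).
Local Notation e := (((rt1 - rem_r m1 N) - (rt2 - rem_r m2 N)) / m).

Hypotheses (Hm : 0 < m) (HG : (1 < G1 < G2)%Z) (Hcop : Z.gcd G1 G2 = 1%Z)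
  (Hs : (1 <= s < G1)%Z) (HN : 0 <= N)
  (HN1 : N < m1 * (1 + INR D1)) (HN2 : N < m2 * (1 + INR D2))
  (He : - IZR s / 2 <= e < IZR s / 2).

Let Hm1 : 0 < m1.
Proof. apply Rmult_lt_0_compat; [exact Hm | apply IZR_lt; lia]. Qed.

Let Hm2 : 0 < m2.
Proof. apply Rmult_lt_0_compat; [exact Hm | apply IZR_lt; lia]. Qed.

Lemma q_decomp : q = IZR k + e.
Proof. unfold rem_r. rewrite minus_IZR, !mult_IZR. field. lra. Qed.

Lemma n1_range : (0 <= n1 < G2)%Z.
Proof.
  pose proof (fold_int_range m1 N D1 Hm1 (conj HN HN1)).
  pose proof (ddot_lt G1 G2 s ltac:(lia)). lia.
Qed.

Lemma n2_range : (0 <= n2 < G1)%Z.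
Proof.
  pose proof (fold_int_range m2 N D2 Hm2 (conj HN HN2)).
  pose proof (ddot_lt G2 G1 s ltac:(lia)). lia.
Qed.

Lemma k_range : (- G2 < k < G1)%Z.
Proof.
  destruct (fold_int_bounds m1 N Hm1), (fold_int_bounds m2 N Hm2).
  split; apply lt_IZR; rewrite ?opp_IZR, minus_IZR, !mult_IZR; nra.
Qed.

Lemma k_In_S2 : (0 <= k)%Z -> In k (Sset G2 G1 D2).
Proof.
  intros Hk. pose proof k_range.
  pose proof (fold_int_range m2 N D2 Hm2 (conj HN HN2)).
  replace k with ((n2 * G2) mod G1)%Z by (symmetry; apply (Z.mod_unique _ _ n1); lia).
  apply Sset_mod_In; lia.
Qed.

Lemma opp_k_In_S1 : (k <= 0)%Z -> In (- k)%Z (Sset G1 G2 D1).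
Proof.
  intros Hk. pose proof k_range.
  pose proof (fold_int_range m1 N D1 Hm1 (conj HN HN1)).
  replace (- k)%Z with ((n1 * G1) mod G2)%Z by (symmetry; apply (Z.mod_unique _ _ n2); lia).
  apply Sset_mod_In; lia.
Qed.

Lemma alg2_correct_pos (nh1 nh2 : Z) : alg2 m G1 G2 j rt1 rt2 nh1 nh2 ->
  IZR s / 2 <= q -> nh1 = n1 /\ nh2 = n2.
Proof.
  intros Halg Hq. rewrite q_decomp in Hq.
  assert (Hk : (0 < k)%Z) by (apply lt_IZR; lra).
  destruct (alg2_branch_i m G1 G2 j rt1 rt2 nh1 nh2 k ltac:(lia) Halg)
    as [Hnh2 [Hmod ->]]; [rewrite q_decomp; lra | apply k_In_S2; lia | rewrite q_decomp; lra |].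
  assert (nh2 = n2) as ->.
  { pose proof n2_range. apply (mul_mod_cancel G2 G1); [exact Hcop | lia | lia |].
    rewrite Hmod. apply (Z.mod_unique _ _ n1); [pose proof k_range; lia | ring]. }
  split; [|reflexivity].
  replace ((IZR n2 * m2 + rt2 - rt1) / m1) with (IZR n1 + (- e) / IZR G1).
  - apply Rround_add_div; [apply IZR_lt; lia|].
    assert (IZR s + 1 <= IZR G1) by (rewrite <- plus_IZR; apply IZR_le; lia). lra.
  - unfold rem_r. field. split; [apply not_0_IZR; lia | lra].
Qed.

Lemma alg2_correct_neg (nh1 nh2 : Z) : alg2 m G1 G2 j rt1 rt2 nh1 nh2 ->
  q < - IZR s / 2 -> nh1 = n1 /\ nh2 = n2.
Proof.
  intros Halg Hq. rewrite q_decomp in Hq.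
  assert (Hk : (k < 0)%Z) by (apply lt_IZR; lra).
  destruct (alg2_branch_ii m G1 G2 j rt1 rt2 nh1 nh2 (- k) ltac:(lia) Halg)
    as [Hnh1 [Hmod ->]];
    [rewrite q_decomp; lra | apply opp_k_In_S1; lia | rewrite q_decomp, opp_IZR; lra |].
  assert (nh1 = n1) as ->.
  { pose proof n1_range. apply (mul_mod_cancel G1 G2); [rewrite Z.gcd_comm; exact Hcop | lia | lia |].
    rewrite Hmod. apply (Z.mod_unique _ _ n2); [pose proof k_range; lia | ring]. }
  split; [reflexivity|].
  replace ((IZR n1 * m1 + rt1 - rt2) / m2) with (IZR n2 + e / IZR G2).
  - apply Rround_add_div; [apply IZR_lt; lia|].
    assert (IZR s + 1 <= IZR G2) by (rewrite <- plus_IZR; apply IZR_le; lia). lra.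
  - unfold rem_r. field. split; [apply not_0_IZR; lia | lra].
Qed.

(* In the window case k = 0, because a nonzero k would lie at distance at least
   σ_j from 0 in S_2 or S_1; then n_2 Γ_2 = n_1 Γ_1 forces n_1 = n_2 = 0. *)
Lemma alg2_correct_small (nh1 nh2 : Z) : alg2 m G1 G2 j rt1 rt2 nh1 nh2 ->
  - IZR s / 2 <= q < IZR s / 2 -> nh1 = n1 /\ nh2 = n2.
Proof.
  intros Halg Hq.
  destruct (alg2_branch_iii m G1 G2 j rt1 rt2 nh1 nh2 Halg Hq) as [-> ->].
  rewrite q_decomp in Hq.
  assert (Hk : k = 0%Z).
  { destruct (Z.lt_trichotomy k 0) as [H|[H|H]]; [exfalso| exact H |exfalso].
    - assert (Hin : In (- k)%Z (Sset G1 G2 D1)) by (apply opp_k_In_S1; lia).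
      assert (Hsep := ddot_separated G1 G2 s (- k)%Z 0%Z Hin (Sset_0 G1 G2 D1)).
      specialize (Hsep ltac:(lia)).
      assert (IZR s <= - IZR k) by (rewrite <- opp_IZR; apply IZR_le; lia). lra.
    - assert (Hin : In k (Sset G2 G1 D2)) by (apply k_In_S2; lia).
      assert (Hsep := ddot_separated G2 G1 s k 0%Z Hin (Sset_0 G2 G1 D2)).
      specialize (Hsep ltac:(lia)).
      assert (IZR s <= IZR k) by (apply IZR_le; lia). lra. }
  pose proof n1_range. pose proof n2_range.
  assert (H2 : n2 = 0%Z).
  { apply (mul_mod_cancel G2 G1); [exact Hcop | lia | lia |].
    replace (n2 * G2)%Z with (n1 * G1)%Z by lia.
    rewrite Z.mod_mul, Z.mul_0_l, Zmod_0_l by lia. reflexivity. }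
  split; [nia | auto].
Qed.

Theorem alg2_correct (nh1 nh2 : Z) : alg2 m G1 G2 j rt1 rt2 nh1 nh2 -> nh1 = n1 /\ nh2 = n2.
Proof.
  intros Halg.
  destruct (Rle_lt_dec (IZR s / 2) q); [now apply alg2_correct_pos|].
  destruct (Rlt_le_dec q (- IZR s / 2)); [now apply alg2_correct_neg|].
  apply alg2_correct_small; auto.
Qed.

End Correctness.

(** * Sharpness at X *)

Section Sharpness.

Variables (m : R) (G1 G2 : Z) (j : nat).

Local Notation s := (eucl_sigma G1 G2 j).
Local Notation m1 := (m * IZR G1).
Local Notation m2 := (m * IZR G2).
Local Notation D1 := (ddot G1 G2 s).
Local Notation D2 := (ddot G2 G1 s).

Hypotheses (Hm : 0 < m) (HG : (1 < G1 < G2)%Z) (Hcop : Z.gcd G1 G2 = 1%Z)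
  (Hs : (1 <= s)%Z).

Definition alg2_fails_at (X : R) : Prop :=
  exists rt1 rt2 : R,
     0 <= rt1 < m1 /\ 0 <= rt2 < m2 /\
     - IZR s / 2 <= ((rt1 - rem_r m1 X) - (rt2 - rem_r m2 X)) / m < IZR s / 2 /\
     (exists nh1 nh2, alg2 m G1 G2 j rt1 rt2 nh1 nh2) /\
     (forall nh1 nh2, alg2 m G1 G2 j rt1 rt2 nh1 nh2 -> (nh1, nh2) <> (fold_int m1 X, fold_int m2 X)).

Lemma half_diff_window (x k : Z) : (Z.abs (x - k) < s)%Z ->
  - IZR s / 2 < (IZR x - IZR k) / 2 < IZR s / 2.
Proof.
  intros H. rewrite <- minus_IZR.
  assert (IZR (- s) < IZR (x - k) < IZR s) by (split; apply IZR_lt; lia).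
  rewrite opp_IZR in H0. lra.
Qed.

Lemma alg2_fails_at_lcm : alg2_fails_at (m * IZR (G1 * G2)).
Proof.
  destruct (fold_int_mul_multiple m G1 G2 Hm ltac:(lia)) as [F1 R1].
  destruct (fold_int_mul_multiple m G2 G1 Hm ltac:(lia)) as [F2 R2].
  rewrite (Z.mul_comm G2 G1) in F1, R1.
  assert (Hs' : 1 <= IZR s) by (apply IZR_le; lia).
  assert (Hm1 : 0 < m1) by (apply Rmult_lt_0_compat; [exact Hm | apply IZR_lt; lia]).
  assert (Hm2 : 0 < m2) by (apply Rmult_lt_0_compat; [exact Hm | apply IZR_lt; lia]).
  assert (Hq : - IZR s / 2 <= (0 - 0) / m < IZR s / 2)
    by (replace ((0 - 0) / m) with 0 by (field; lra); lra).
  exists 0, 0. rewrite R1, R2. repeat split; try lra.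
  - exists 0%Z, 0%Z. apply alg2_branch_iii_exists; [lia | exact Hq].
  - intros nh1 nh2 Halg. apply alg2_branch_iii in Halg as [-> ->]; [|exact Hq].
    rewrite F1. intros E. injection E. lia.
Qed.

(* Here N = m (n̈_{2,j} + 1) Γ_2, so n_2 = n̈_{2,j} + 1 and r_2 = 0 while
   r_1 = m k with k = |n_2 Γ_2|_{Γ_1}; the erroneous r~_1 = m (x + k)/2 sits halfway
   between k and its close neighbour x, which the algorithm then selects. *)
Lemma alg2_fails_at_ddot2 : (Z.of_nat (S D2) < G1)%Z -> alg2_fails_at (m2 * (1 + INR D2)).
Proof.
  intros HD.
  destruct (ddot_succ_close G2 G1 s ltac:(lia) ltac:(rewrite Z.gcd_comm; exact Hcop) HD)
    as [x [Hx [Hxk Hxs]]].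
  set (n2 := Z.of_nat (S D2)) in *. set (k := ((n2 * G2) mod G1)%Z) in *.
  replace (m2 * (1 + INR D2)) with (m * IZR (n2 * G2))
    by (unfold n2; rewrite mult_IZR, <- INR_IZR_INZ, S_INR; ring).
  destruct (fold_int_mul m G1 (n2 * G2) Hm ltac:(lia)) as [_ R1].
  destruct (fold_int_mul_multiple m G2 n2 Hm ltac:(lia)) as [F2 R2].
  fold k in R1.
  pose proof (Sset_bound G2 G1 D2 x ltac:(lia) Hx) as [Hx0 Hx1].
  pose proof (Z.mod_pos_bound (n2 * G2) G1 ltac:(lia)) as [Hk0 Hk1]. fold k in Hk0, Hk1.
  apply IZR_le in Hx0, Hk0. apply IZR_lt in Hx1, Hk1.
  pose proof (half_diff_window x k Hxs) as Hwin.
  assert (HG2 : 1 < IZR G2) by (apply IZR_lt; lia).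
  assert (Hq : (m * (IZR x + IZR k) / 2 - 0) / m = (IZR x + IZR k) / 2) by (field; lra).
  assert (Hqx : (IZR x + IZR k) / 2 - IZR x = - ((IZR x - IZR k) / 2)) by field.
  exists (m * (IZR x + IZR k) / 2), 0. rewrite R1, R2.
  split; [split; nra|]. split; [split; nra|]. split.
  { replace ((m * (IZR x + IZR k) / 2 - m * IZR k - (0 - 0)) / m)
      with ((IZR x - IZR k) / 2) by (field; lra). lra. }
  destruct (Rle_lt_dec (IZR s / 2) ((IZR x + IZR k) / 2)) as [C|C]; split.
  - destruct (mod_inverse_exists G2 G1 ltac:(lia) ltac:(rewrite Z.gcd_comm; exact Hcop))
      as [inv Hinv].
    eexists; eexists. apply (alg2_branch_i_exists m G1 G2 j _ _ x inv); try lia;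
      rewrite ?Hq, ?Hqx; try lra; assumption.
  - intros nh1 nh2 H E. apply pair_equal_spec in E as [_ E2].
    destruct (alg2_branch_i m G1 G2 j _ _ nh1 nh2 x ltac:(lia) H) as [_ [Hmod _]];
      rewrite ?Hq, ?Hqx; try lra; [assumption|].
    rewrite E2, F2 in Hmod. apply Hxk. symmetry. exact Hmod.
  - exists 0%Z, 0%Z. apply alg2_branch_iii_exists; [lia|]. rewrite Hq. lra.
  - intros nh1 nh2 H E. apply pair_equal_spec in E as [_ E2].
    apply alg2_branch_iii in H as [_ ->]; [|rewrite Hq; lra].
    rewrite F2 in E2. unfold n2 in E2. lia.
Qed.

Lemma alg2_fails_at_ddot1 : (Z.of_nat (S D1) < G2)%Z -> alg2_fails_at (m1 * (1 + INR D1)).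
Proof.
  intros HD.
  destruct (ddot_succ_close G1 G2 s ltac:(lia) Hcop HD) as [x [Hx [Hxk Hxs]]].
  set (n1 := Z.of_nat (S D1)) in *. set (k := ((n1 * G1) mod G2)%Z) in *.
  replace (m1 * (1 + INR D1)) with (m * IZR (n1 * G1))
    by (unfold n1; rewrite mult_IZR, <- INR_IZR_INZ, S_INR; ring).
  destruct (fold_int_mul_multiple m G1 n1 Hm ltac:(lia)) as [F1 R1].
  destruct (fold_int_mul m G2 (n1 * G1) Hm ltac:(lia)) as [_ R2].
  fold k in R2.
  pose proof (Sset_bound G1 G2 D1 x ltac:(lia) Hx) as [Hx0 Hx1].
  pose proof (Z.mod_pos_bound (n1 * G1) G2 ltac:(lia)) as [Hk0 Hk1]. fold k in Hk0, Hk1.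
  apply IZR_le in Hx0, Hk0. apply IZR_lt in Hx1, Hk1.
  pose proof (half_diff_window x k Hxs) as Hwin.
  assert (HG1 : 1 < IZR G1) by (apply IZR_lt; lia).
  assert (Hq : (0 - m * (IZR x + IZR k) / 2) / m = - ((IZR x + IZR k) / 2)) by (field; lra).
  assert (Hqx : - ((IZR x + IZR k) / 2) + IZR x = (IZR x - IZR k) / 2) by field.
  exists 0, (m * (IZR x + IZR k) / 2). rewrite R1, R2.
  split; [split; nra|]. split; [split; nra|]. split.
  { replace ((0 - 0 - (m * (IZR x + IZR k) / 2 - m * IZR k)) / m)
      with (- ((IZR x - IZR k) / 2)) by (field; lra). lra. }
  destruct (Rlt_le_dec (- ((IZR x + IZR k) / 2)) (- IZR s / 2)) as [C|C]; split.
  - destruct (mod_inverse_exists G1 G2 ltac:(lia) Hcop) as [inv Hinv].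
    eexists; eexists. apply (alg2_branch_ii_exists m G1 G2 j _ _ x inv); try lia;
      rewrite ?Hq, ?Hqx; try lra; assumption.
  - intros nh1 nh2 H E. apply pair_equal_spec in E as [E1 _].
    destruct (alg2_branch_ii m G1 G2 j _ _ nh1 nh2 x ltac:(lia) H) as [_ [Hmod _]];
      rewrite ?Hq, ?Hqx; try lra; [assumption|].
    rewrite E1, F1 in Hmod. apply Hxk. symmetry. exact Hmod.
  - exists 0%Z, 0%Z. apply alg2_branch_iii_exists; [lia|]. rewrite Hq. lra.
  - intros nh1 nh2 H E. apply pair_equal_spec in E as [E1 _].
    apply alg2_branch_iii in H as [-> _]; [|rewrite Hq; lra].
    rewrite F1 in E1. unfold n1 in E1. lia.
Qed.

Theorem alg2_fails_at_X : alg2_fails_at (Rmin (m2 * (1 + INR D2)) (m1 * (1 + INR D1))).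
Proof.
  pose proof (ddot_lt G2 G1 s ltac:(lia)). pose proof (ddot_lt G1 G2 s ltac:(lia)).
  unfold Rmin. destruct (Rle_dec _ _) as [_|_].
  - destruct (Z.eq_dec (Z.of_nat (S D2)) G1) as [E|E]; [|apply alg2_fails_at_ddot2; lia].
    apply (f_equal IZR) in E. rewrite <- INR_IZR_INZ, S_INR in E.
    replace (m2 * (1 + INR D2)) with (m * IZR (G1 * G2))
      by (rewrite mult_IZR, <- E; ring).
    apply alg2_fails_at_lcm.
  - destruct (Z.eq_dec (Z.of_nat (S D1)) G2) as [E|E]; [|apply alg2_fails_at_ddot1; lia].
    apply (f_equal IZR) in E. rewrite <- INR_IZR_INZ, S_INR in E.
    replace (m1 * (1 + INR D1)) with (m * IZR (G1 * G2))
      by (rewrite mult_IZR, <- E; ring).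
    apply alg2_fails_at_lcm.
Qed.

End Sharpness.

Lemma error_window_of_tau (m tau d1 d2 s : R) : 0 < m -> tau < m * s / 4 ->
  Rabs d1 <= tau -> Rabs d2 <= tau -> - s / 2 <= (d1 - d2) / m < s / 2.
Proof.
  intros Hm Ht H1 H2.
  pose proof (Rle_abs d1). pose proof (Rle_abs (- d1)). rewrite Rabs_Ropp in *.
  pose proof (Rle_abs d2). pose proof (Rle_abs (- d2)). rewrite Rabs_Ropp in *.
  split; [apply (Rmult_le_reg_r m) | apply (Rmult_lt_reg_r m)]; try lra;
    replace ((d1 - d2) / m * m) with (d1 - d2) by (field; lra); lra.
Qed.

Theorem theorem4 (m : R) (G1 G2 : Z) (K j : nat) :
  0 < m -> (1 < G1 < G2)%Z -> Z.gcd G1 G2 = 1%Z ->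
  (1 < eucl_sigma G1 G2 K)%Z -> eucl_sigma G1 G2 (S K) = 1%Z ->
  (1 <= j <= S K)%nat ->
  let m1 := m * IZR G1 in
  let m2 := m * IZR G2 in
  let sj := IZR (eucl_sigma G1 G2 j) in
  let X := Rmin (m2 * (1 + INR (ddot G2 G1 (eucl_sigma G1 G2 j))))
                (m1 * (1 + INR (ddot G1 G2 (eucl_sigma G1 G2 j)))) in
  (* (a) *)
  (forall N rt1 rt2 : R,
     0 <= N < X -> 0 <= rt1 < m1 -> 0 <= rt2 < m2 ->
     - sj / 2 <= ((rt1 - rem_r m1 N) - (rt2 - rem_r m2 N)) / m < sj / 2 ->
     forall nh1 nh2, alg2 m G1 G2 j rt1 rt2 nh1 nh2 ->
       nh1 = fold_int m1 N /\ nh2 = fold_int m2 N) /\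
  (* (a), "in particular" *)
  (forall tau : R, tau < m * sj / 4 ->
   forall N rt1 rt2 : R,
     0 <= N < X -> 0 <= rt1 < m1 -> 0 <= rt2 < m2 ->
     Rabs (rt1 - rem_r m1 N) <= tau -> Rabs (rt2 - rem_r m2 N) <= tau ->
     forall nh1 nh2, alg2 m G1 G2 j rt1 rt2 nh1 nh2 ->
       nh1 = fold_int m1 N /\ nh2 = fold_int m2 N) /\
  (* (b) sharpness *)
  (exists rt1 rt2 : R,
     0 <= rt1 < m1 /\ 0 <= rt2 < m2 /\
     - sj / 2 <= ((rt1 - rem_r m1 X) - (rt2 - rem_r m2 X)) / m < sj / 2 /\
     (exists nh1 nh2, alg2 m G1 G2 j rt1 rt2 nh1 nh2) /\
     (forall nh1 nh2, alg2 m G1 G2 j rt1 rt2 nh1 nh2 ->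
        (nh1, nh2) <> (fold_int m1 X, fold_int m2 X))).
Proof.
  intros Hm HG Hcop HK HK1 Hj m1 m2 sj X.
  pose proof (eucl_sigma_range G1 G2 ltac:(lia) K j HK HK1 Hj) as Hs.
  assert (Correct : forall N rt1 rt2 : R, 0 <= N < X ->
     - sj / 2 <= ((rt1 - rem_r m1 N) - (rt2 - rem_r m2 N)) / m < sj / 2 ->
     forall nh1 nh2, alg2 m G1 G2 j rt1 rt2 nh1 nh2 ->
       nh1 = fold_int m1 N /\ nh2 = fold_int m2 N).
  { intros N rt1 rt2 [HN HX] Herr.
    apply alg2_correct; auto; eapply Rlt_le_trans; eauto; [apply Rmin_r | apply Rmin_l]. }
  split; [|split].
  - intros N rt1 rt2 HN _ _. now apply Correct.
  - intros tau Htau N rt1 rt2 HN _ _ H1 H2. apply Correct; [exact HN|].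
    now apply (error_window_of_tau m tau).
  - apply alg2_fails_at_X; auto. lia.
Qed.
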